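(* Let $(V_o,w_o,\mu_o)$ be a simple weighted graph with adapted weight $\sigma_o$, fix $\bar x\in V_o$, and let $(V,w,\mu)$ be its modified graph with weight $\mathfrak n$ and adapted path metric $d_\sigma$, with edge set $E$. Assume the balls of $(V,d_\sigma)$ are finite. For $n\in\mathbb N$ let $R_n=2^{n+4}$ and set: - $B_n^o=B_{d_\sigma}(\bar x,R_n-1)\cap V_o$; - $E^o_n=\{(x,y)\in E_o: x,y\in B^o_n\}$; - $B_n'=B_n^o\cup\bigcup_{e\in E_n^o}V_e$ (with $V_e$ taken for whichever orientation of $e$ lies in $E_o^+$); - $B_n=\operatorname{int}(B_n')$. Here closures, interiors and boundaries are taken with respect to the graph $(V,E)$. Then: (1) $\partial B_n\subseteq V_o$; (2) $B_{d_\sigma}(\bar x,R_n-3)\subseteq B_n\subseteq B_{d_\sigma}(\bar x,R_n)$; (3) for all $n\ge1$, if $x\in\partial B_{n-1}$ and $y\in\partial B_n$, then $d_\sigma(x,y)\ge R_{n-1}-3$.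
   Context: **Weighted graphs.** A simple weighted graph $(V,w,\mu)$ consists of a countably infinite set $V$, a symmetric function $w:V\times V\to[0,\infty)$ and a function $\mu:V\to(0,\infty)$. The graph with edges $\{x\sim y:w(x,y)>0\}$ is assumed to be locally finite, connected, and without loops or multiple edges. **Adapted weights and metrics.** An adapted weight is a symmetric $\sigma:E\to(0,1]$ with $\frac1{\mu(x)}\sum_y w(x,y)\sigma(x,y)^2\le1$ for all $x$. The adapted path metric $d_\sigma(x,y)$ is the infimum of $\sum_i\sigma(x_i,x_{i+1})$ over paths $x=x_0\sim\cdots\sim x_n=y$. Closed balls are $B_d(x,r)=\{y:d(x,y)\le r\}$. **Modified graph.** Fix an orientation $E_o^+$ of $E_o$, and let $\mathfrak n:E_o\to\mathbb N_+$ be symmetric with $\mathfrak n\ge2$. For $e=(x,y)\in E_o^+$, add distinct new vertices $V_e=\{x^e_1,\dots,x^e_{\mathfrak n(e)-1}\}$, set $x_0^e=x$, $x^e_{\mathfrak n(e)}=y$, and replace the edge $x\sim y$ by the path $x^e_0\sim\cdots\sim x^e_{\mathfrak n(e)}$; $E$ is the resulting edge set on $V=V_o\cup\bigcup_eV_e$. Weights and measure: - $w(x^e_i,x^e_{i+1})=\mathfrak n(e)w_o(e)$, symmetric, and $w=0$ otherwise; - $\mu=\mu_o$ on $V_o$, and $\mu(x^e_i)=2w_o(e)\sigma_o(e)^2/\mathfrak n(e)$; - $\sigma(x^e_i,x^e_{i+1})=\sigma_o(e)/\mathfrak n(e)$. **Graph closure, boundary, interior.** For finite $K\subseteq V$: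 - $\mathrm{cl}(K)=K\cup\{x:\exists y\in K,\ x\sim y\}$; - $\partial K=\mathrm{cl}(K)\setminus K$; - $\operatorname{int}(K)$ is the largest $L\subseteq K$ with $\mathrm{cl}(L)\subseteq K$. *)

From Stdlib Require Import Relations.
From mathcomp Require Import all_boot all_order all_algebra.
From mathcomp Require Import all_classical all_reals.
From mathcomp Require Import ereal.
Set Implicit Arguments. Unset Strict Implicit. Unset Printing Implicit Defensive.
Import Order.TTheory GRing.Theory Num.Theory.
Local Open Scope classical_set_scope.
Local Open Scope ring_scope.
Local Open Scope ereal_scope.
Local Open Scope ring_scope.

Definition oedge {R : realType} {Vo : Type} (wo : Vo -> Vo -> R) (x y : Vo) : Prop :=
  0 < wo x y.

Definition simple_weighted_graph {R : realType} {Vo : countType}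
  (wo : Vo -> Vo -> R) (muo : Vo -> R) : Prop :=
  [/\ infinite_set [set: Vo],
      (forall x y, wo x y = wo y x),
      (forall x y, 0 <= wo x y) &
      (forall x, 0 < muo x)] /\
  [/\
      (forall x, finite_set [set y | oedge wo x y]),
      (forall x y, clos_refl_trans Vo (oedge wo) x y) &
      (forall x, wo x x = 0)].

Definition adapted_weight {R : realType} {Vo : countType}
  (wo : Vo -> Vo -> R) (muo : Vo -> R) (so : Vo -> Vo -> R) : Prop :=
  [/\ (forall x y, oedge wo x y -> so x y = so y x),
      (forall x y, oedge wo x y -> 0 < so x y <= 1) &
      (forall x, (\sum_(y \in [set y | oedge wo x y]) (wo x y * so x y ^+ 2))
                   / muo x <= 1)].

Definition orientation {R : realType} {Vo : Type}
  (wo : Vo -> Vo -> R) (pos : Vo -> Vo -> Prop) : Prop :=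
  (forall x y, pos x y -> oedge wo x y) /\
  (forall x y, oedge wo x y -> (pos x y \/ pos y x) /\ ~ (pos x y /\ pos y x)).

Definition subdiv_weight {R : realType} {Vo : Type}
  (wo : Vo -> Vo -> R) (n : Vo -> Vo -> nat) : Prop :=
  forall x y, oedge wo x y -> n x y = n y x /\ (2 <= n x y)%N.

(* Vertices: Old x (x in V_o) and New x y i = x^e_i for e = (x,y) in E_o^+,
   0 < i < n(e).  Terms New x y i not satisfying this are not vertices of V;
   they are never adjacent to anything (see [mvalid]). *)
Inductive mvert (Vo : Type) : Type :=
| Old of Vo
| New of Vo & Vo & nat.
Arguments Old {Vo}.
Arguments New {Vo}.

Section Modified.
Context {R : realType} {Vo : Type}.
Variables (wo : Vo -> Vo -> R) (so : Vo -> Vo -> R)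
          (n : Vo -> Vo -> nat) (pos : Vo -> Vo -> Prop).

Definition mvalid (v : mvert Vo) : Prop :=
  match v with
  | Old _ => True
  | New x y i => pos x y /\ (0 < i < n x y)%N
  end.

Definition pt (x y : Vo) (i : nat) : mvert Vo :=
  if i == 0%N then Old x else if i == n x y then Old y else New x y i.

Definition mstep (u v : mvert Vo) (s : R) : Prop :=
  exists x y i, [/\ pos x y, (i < n x y)%N,
    (u = pt x y i /\ v = pt x y i.+1) \/ (v = pt x y i /\ u = pt x y i.+1) &
    s = so x y / (n x y)%:R].

Definition madj (u v : mvert Vo) : Prop := exists s, mstep u v s.

Inductive mpath : mvert Vo -> mvert Vo -> R -> Prop :=
| mpath_nil u : mpath u u 0
| mpath_cons u v w s L : mstep u v s -> mpath v w L -> mpath u w (s + L).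

(* adapted path metric d_sigma (infimum over paths, +oo if none) *)
Definition dsig (u v : mvert Vo) : \bar R :=
  ereal_inf [set (L%:E) | L in mpath u v].

Definition mball (x : mvert Vo) (r : R) : set (mvert Vo) :=
  [set y | mvalid y /\ (dsig x y <= r%:E)%E].

Definition gcl (K : set (mvert Vo)) : set (mvert Vo) :=
  K `|` [set x | exists2 y, K y & madj x y].
Definition gbd (K : set (mvert Vo)) : set (mvert Vo) := gcl K `\` K.
Definition gint (K : set (mvert Vo)) : set (mvert Vo) :=
  [set x | exists L : set (mvert Vo), [/\ L `<=` K, gcl L `<=` K & L x]].

Definition Rn (k : nat) : R := 2 ^+ (k + 4).

Definition Bo (xbar : Vo) (k : nat) : set Vo :=
  [set x | (dsig (Old xbar) (Old x) <= (Rn k - 1)%:E)%E].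

Definition Bprime (xbar : Vo) (k : nat) : set (mvert Vo) :=
  [set v | match v with
           | Old x => Bo xbar k x
           | New x y i => [/\ pos x y, (0 < i < n x y)%N,
                              Bo xbar k x & Bo xbar k y]
           end].

Definition Bn (xbar : Vo) (k : nat) : set (mvert Vo) := gint (Bprime xbar k).

End Modified.

From mathcomp Require Import all_boot all_order all_algebra.
From mathcomp Require Import all_classical all_reals.
From mathcomp Require Import ereal.
From mathcomp Require Import lra zify.
Set Implicit Arguments. Unset Strict Implicit. Unset Printing Implicit Defensive.
Import Order.TTheory GRing.Theory Num.Theory.
Local Open Scope classical_set_scope.
Local Open Scope ring_scope.

(* Any two points of a subdivided edge e are joined along e by a path of length
   at most sigma_o(e) <= 1.  Hence a point of V_e within R_n - 3 of xbar has both
   endpoints of e in B^o_n, so it and all its neighbours lie in B'_n, which gives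
   the left inclusion of (2); the right one follows the same way from the
   endpoint of e lying in B^o_n.  A new vertex of B'_n has all its neighbours in
   B'_n, so it is interior and never on the boundary, which is (1).  Finally a
   boundary point of B_{n-1} is an old vertex within R_{n-1} - 1 of xbar; if some
   y were closer to it than R_{n-1} - 3, then y would lie within
   2 R_{n-1} - 4 = R_n - 4 of xbar, hence in B_n, so not on its boundary. *)

Section ModifiedGraph.
Variables (R : realType) (Vo : Type) (so : Vo -> Vo -> R)
          (n : Vo -> Vo -> nat) (pos : Vo -> Vo -> Prop).

Local Notation pt := (pt n).
Local Notation path := (mpath so n pos).
Local Notation d := (dsig so n pos).
Local Notation adj := (madj so n pos).

Lemma mpath_cat a b c L1 L2 : path a b L1 -> path b c L2 -> path a c (L1 + L2).
Proof.
elim=> [u|u v w s L st _ IH] p2; first by rewrite add0r.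
by rewrite -addrA; apply: mpath_cons st (IH p2).
Qed.

Lemma dsig_le_path a b c L : path b c L -> (d a c <= d a b + L%:E)%E.
Proof.
move=> pbc; rewrite -leeBlDr //.
apply: le_ereal_inf_tmp => _ [L1 p1 <-].
rewrite leeBlDr //= -EFinD.
by apply: ereal_inf_lbound; exists (L1 + L) => //; apply: mpath_cat p1 pbc.
Qed.

Lemma dsig_le_path_trans a b c L r r' :
  path b c L -> r + L <= r' -> (d a b <= r%:E)%E -> (d a c <= r'%:E)%E.
Proof.
move=> p hr hb; apply: le_trans (@dsig_le_path a _ _ _ p) _.
by apply: le_trans (leeD2r _ hb) _; rewrite -EFinD lee_fin.
Qed.

Lemma pt_nat x y : (0 < n x y)%N -> pt x y (n x y) = Old y.
Proof. by rewrite /pt eqxx; case: eqP => // ->. Qed.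

Lemma pt_New x y i : mvalid n pos (New x y i) -> pt x y i = New x y i.
Proof. by move=> [_ /andP[i0 iN]]; rewrite /pt gtn_eqF // ltn_eqF. Qed.

Lemma pt_eq_New x y m a b i : pt x y m = New a b i -> [/\ x = a, y = b & m = i].
Proof. by rewrite /pt; case: eqP => // _; case: eqP => // _ [-> -> ->]. Qed.

Lemma mpath_pt x y : pos x y -> forall m i, (i + m <= n x y)%N ->
  path (pt x y i) (pt x y (i + m)) (m%:R * (so x y / (n x y)%:R)) /\
  path (pt x y (i + m)) (pt x y i) (m%:R * (so x y / (n x y)%:R)).
Proof.
move=> pxy; elim=> [|m IH] i him.
  by rewrite addn0 mul0r; split; apply: mpath_nil.
have fwd : mstep so n pos (pt x y i) (pt x y i.+1) (so x y / (n x y)%:R).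
  by exists x, y, i; split => //; [lia | left].
have bwd : mstep so n pos (pt x y (i + m).+1) (pt x y (i + m)) (so x y / (n x y)%:R).
  by exists x, y, (i + m); split => //; [lia | right].
rewrite mulrSr mulrDl mul1r addrC; split.
- have [p _] := IH i.+1 ltac:(lia).
  by rewrite addnS -addSn; apply: mpath_cons fwd p.
- have [_ p] := IH i ltac:(lia).
  by rewrite addnS; apply: mpath_cons bwd p.
Qed.

Lemma mstep_pt u v s : mstep so n pos u v s -> exists x y j j',
  [/\ pos x y, (j <= n x y)%N, (j' <= n x y)%N, u = pt x y j & v = pt x y j'].
Proof.
move=> [x [y [i [pxy hi [[-> ->]|[-> ->]] _]]]].
- by exists x, y, i, i.+1; split => //; apply: ltnW.
- by exists x, y, i.+1, i; split => //; apply: ltnW.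
Qed.

Lemma gint_iff (K : set (mvert Vo)) u :
  gint so n pos K u <-> K u /\ forall z, adj z u -> K z.
Proof.
split.
- by move=> [L [LK clK Lu]]; split; [apply: LK | move=> z hz; apply: clK; right; exists u].
- move=> [Ku hz]; exists [set u]; split => [z -> //|z [->|[w -> hw]] //|//].
  exact: hz.
Qed.

Lemma gbd_gint_sub (K : set (mvert Vo)) : gbd so n pos (gint so n pos K) `<=` K.
Proof.
move=> v [[/gint_iff[]//|[u /gint_iff[_ hK] hvu]] _].
exact: hK.
Qed.

Section Subdivision.
Hypothesis so_ge0_le1 : forall {x y}, pos x y -> 0 <= so x y <= 1.
Hypothesis n_ge2 : forall {x y}, pos x y -> (2 <= n x y)%N.

Lemma madj_mvalid u v : adj u v -> mvalid n pos u.
Proof.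
move=> [s /mstep_pt [x [y [j [j' [pxy hj _ -> _]]]]]].
have := n_ge2 pxy; rewrite /pt; case: eqP => // ?; case: eqP => // ? /=.
by split => //; lia.
Qed.

Lemma gbd_mvalid (K : set (mvert Vo)) v : gbd so n pos K v -> mvalid n pos v.
Proof. by move=> [[//|[u _ /madj_mvalid]]]. Qed.

Lemma mpath_pt_le1 x y i j : pos x y -> (i <= n x y)%N -> (j <= n x y)%N ->
  exists2 L, L <= 1 & path (pt x y i) (pt x y j) L.
Proof.
move=> pxy hi hj; set m := if (i <= j)%N then (j - i)%N else (i - j)%N.
have step_le1 : m%:R * (so x y / (n x y)%:R) <= 1.
  have N0 : (0 : R) < (n x y)%:R by rewrite ltr0n; have := n_ge2 pxy; lia.
  have /andP[s0 s1] := so_ge0_le1 pxy.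
  apply: (@le_trans _ _ ((n x y)%:R * (so x y / (n x y)%:R))).
    by apply: ler_wpM2r; [apply: divr_ge0; lra | rewrite ler_nat /m; case: ifP; lia].
  by rewrite mulrC -mulrA mulVf ?mulr1 // gt_eqF.
exists (m%:R * (so x y / (n x y)%:R)) => //; rewrite /m.
case: leqP => hij.
- by have [+ _] := @mpath_pt x y pxy (j - i) i ltac:(lia); rewrite subnKC.
- by have [_ +] := @mpath_pt x y pxy (i - j) j ltac:(lia); rewrite subnKC // ltnW.
Qed.

Lemma dsig_pt_le a x y i j r : pos x y -> (i <= n x y)%N -> (j <= n x y)%N ->
  (d a (pt x y i) <= r%:E)%E -> (d a (pt x y j) <= (r + 1)%:E)%E.
Proof.
move=> pxy hi hj; have [L L1 p] := mpath_pt_le1 pxy hi hj.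
by apply: dsig_le_path_trans p _; lra.
Qed.

Lemma Bo_ends xbar k x y j : pos x y -> (j <= n x y)%N ->
  (d (Old xbar) (pt x y j) <= (Rn k - 3)%:E)%E ->
  Bo so n pos xbar k x /\ Bo so n pos xbar k y.
Proof.
move=> pxy hj hd; have n0 : (0 < n x y)%N by have := n_ge2 pxy; lia.
have le_Bo z : (d (Old xbar) (Old z) <= (Rn k - 3 + 1)%:E)%E -> Bo so n pos xbar k z.
  by move=> hz; apply: le_trans hz _; rewrite lee_fin; lra.
split; apply: le_Bo.
- by rewrite -[Old x]/(pt x y 0); apply: dsig_pt_le hd.
- by rewrite -(pt_nat n0); apply: dsig_pt_le hd.
Qed.

Lemma Bprime_pt xbar k x y m : pos x y -> (m <= n x y)%N ->
  Bo so n pos xbar k x -> Bo so n pos xbar k y -> Bprime so n pos xbar k (pt x y m).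
Proof.
move=> pxy hm bx b_y; have := n_ge2 pxy.
by rewrite /pt; case: eqP => // ?; case: eqP => // ? /= ?; split => //; lia.
Qed.

Lemma Bprime_New_adj xbar k a b i z :
  Bprime so n pos xbar k (New a b i) -> adj z (New a b i) -> Bprime so n pos xbar k z.
Proof.
move=> [_ _ ba bb] [s /mstep_pt [x [y [j [j' [pxy hj hj' -> /esym/pt_eq_New[ea eb _]]]]]]].
by subst; apply: Bprime_pt.
Qed.

Lemma gbd_Bn_Old xbar k : gbd so n pos (Bn so n pos xbar k) `<=` range Old.
Proof.
move=> v hv; have := gbd_gint_sub hv; case: v hv => [z _ _|a b i [_ notBn] hB].
  by exists z.
by exfalso; apply/notBn/gint_iff; split => // z; apply: Bprime_New_adj.
Qed.

Lemma mball_sub_Bn xbar k :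
  mball so n pos (Old xbar) (Rn k - 3) `<=` Bn so n pos xbar k.
Proof.
move=> v [hv hd]; apply/gint_iff; split.
- case: v hv hd => [z _ hd|a b i hv hd] /=.
    by apply: le_trans hd _; rewrite lee_fin; lra.
  have [pab hi] := hv; have /andP[_ /ltnW hin] := hi.
  rewrite -pt_New // in hd; have [ba bb] := Bo_ends pab hin hd.
  by split.
- move=> z [s /mstep_pt [x [y [j [j' [pxy hj hj' -> ev]]]]]].
  rewrite ev in hd; have [bx b_y] := Bo_ends pxy hj' hd.
  exact: Bprime_pt.
Qed.

Lemma Bn_sub_mball xbar k : Bn so n pos xbar k `<=` mball so n pos (Old xbar) (Rn k).
Proof.
move=> v /gint_iff[+ _]; case: v => [z hz|a b i [pab /andP[i0 hi] ba _]].
  by split => //; apply: le_trans hz _; rewrite lee_fin; lra.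
have hv : mvalid n pos (New a b i) by split => //; rewrite i0.
split=> //; rewrite -pt_New // -(subrK 1 (Rn k)).
by apply: (dsig_pt_le (i := 0)) ba => //; apply: ltnW.
Qed.

Lemma dsig_gbd_Bn_ge xbar k x y : (1 <= k)%N ->
  gbd so n pos (Bn so n pos xbar k.-1) x -> gbd so n pos (Bn so n pos xbar k) y ->
  ((Rn k.-1 - 3)%:E <= d x y)%E.
Proof.
move=> k1 hx hy; have [z _ ez] := gbd_Bn_Old hx; subst x.
have hz : Bo so n pos xbar k.-1 z := gbd_gint_sub hx.
have yv := gbd_mvalid hy.
rewrite leNgt; apply/negP => /ereal_inf_lt[_ [L p <-]].
rewrite lte_fin => hL; case: hy => _; apply; apply: mball_sub_Bn.
split=> //.
apply: dsig_le_path_trans p _ hz.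
have -> : Rn k = 2 * Rn k.-1 :> R by rewrite /Rn -{1}(prednK k1) addSn exprS.
lra.
Qed.

End Subdivision.
End ModifiedGraph.

Theorem lemma4p3 (R : realType) (Vo : countType)
  (wo : Vo -> Vo -> R) (muo : Vo -> R) (so : Vo -> Vo -> R)
  (n : Vo -> Vo -> nat) (pos : Vo -> Vo -> Prop) (xbar : Vo) :
  simple_weighted_graph wo muo ->
  adapted_weight wo muo so ->
  orientation wo pos ->
  subdiv_weight wo n ->
  (forall (x : mvert Vo) (r : R), mvalid n pos x ->
     finite_set (mball so n pos x r)) ->
  forall k : nat,
    [/\ gbd so n pos (Bn so n pos xbar k) `<=` range (@Old Vo),
        mball so n pos (Old xbar) (@Rn R k - 3) `<=` Bn so n pos xbar k,
        Bn so n pos xbar k `<=` mball so n pos (Old xbar) (@Rn R k) &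
        ((1 <= k)%N -> forall x y : mvert Vo,
            gbd so n pos (Bn so n pos xbar k.-1) x ->
            gbd so n pos (Bn so n pos xbar k) y ->
            ((@Rn R k.-1 - 3)%:E <= dsig so n pos x y)%E)].
Proof.
move=> _ [_ so_range _] [pos_edge _] n_range _ k.
have so_ge0_le1 x y : pos x y -> 0 <= so x y <= 1.
  by move=> /pos_edge /so_range /andP[s0 ->]; rewrite ltW.
have n_ge2 x y : pos x y -> (2 <= n x y)%N by move=> /pos_edge /n_range[].
split.
- exact: gbd_Bn_Old n_ge2 xbar k.
- exact: mball_sub_Bn so_ge0_le1 n_ge2 xbar k.
- exact: Bn_sub_mball so_ge0_le1 n_ge2 xbar k.
- by move=> k1 x y; apply: dsig_gbd_Bn_ge so_ge0_le1 n_ge2 xbar k x y k1.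
Qed.
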